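(* Let $L,R$ be nonempty subsets of a group $G$. The two-sided group digraph $2\mathrm{S}(G;L,R)$ is weakly connected if and only if $G=\mathcal{W}(\bar{L})\mathcal{W}(\bar{R})$ and some element of $\bar{L}$ or of $\bar{R}$ is weakly connected to $e$.
   Context: For nonempty subsets $L,R$ of a group $G$, the two-sided group digraph $2\mathrm{S}(G;L,R)$ has vertex set $G$ and a directed arc $(g,h)$ if and only if $h=l^{-1}gr$ for some $l\in L$, $r\in R$. Write $\bar{L}=L\cup L^{-1}$, $\bar{R}=R\cup R^{-1}$; for nonempty $S$, $\mathcal{W}(S)$ is the set of elements expressible as finite products $s_1\cdots s_n$, $n\ge1$, $s_i\in S$. Vertex $g$ is weakly connected to $h$ if there is a sequence $g=g_0,\dots,g_n=h$ such that for each $i$ either $(g_{i-1},g_i)$ or $(g_i,g_{i-1})$ is an arc; the digraph is weakly connected if every pair of vertices is weakly connected. *)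

Set Implicit Arguments.

Record Group := {
  carrier :> Type;
  gmul : carrier -> carrier -> carrier;
  ginv : carrier -> carrier;
  gone : carrier;
  gmul_assoc : forall x y z, gmul x (gmul y z) = gmul (gmul x y) z;
  gmul_1l : forall x, gmul gone x = x;
  gmul_1r : forall x, gmul x gone = x;
  gmul_Vl : forall x, gmul (ginv x) x = gone;
  gmul_Vr : forall x, gmul x (ginv x) = gone
}.

Section TwoSided.
Context {G : Group}.

Definition arc2S (L R : G -> Prop) (g h : G) : Prop :=
  exists l r, L l /\ R r /\ h = gmul G (gmul G (ginv G l) g) r.

Inductive weakly_connected (L R : G -> Prop) : G -> G -> Prop :=
  | wc_refl : forall g, weakly_connected L R g g
  | wc_step : forall g k h,
      (arc2S L R g k \/ arc2S L R k g) ->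
      weakly_connected L R k h -> weakly_connected L R g h.

Definition digraph_weakly_connected (L R : G -> Prop) : Prop :=
  forall g h : G, weakly_connected L R g h.

Definition sbar (S : G -> Prop) (x : G) : Prop := S x \/ S (ginv G x).

Inductive Wprod (S : G -> Prop) : G -> Prop :=
  | W_one : forall s, S s -> Wprod S s
  | W_cons : forall s t, S s -> Wprod S t -> Wprod S (gmul G s t).

End TwoSided.

(* Every arc g -> l^-1 g r can be traversed in the opposite direction, so the
   weak component of g is its orbit under g |-> l^-1 g r and g |-> l g r^-1;
   both maps preserve W(L̄)W(R̄), which contains e, giving necessity.
   Conversely, l z ~ z r for l in L, r in R, and from this one shows that
   g ~ h implies g s ~ h s for every s in R̄.  An element of L̄ ∪ R̄ in the
   component of e then forces all of R̄ into it, after which the component of e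
   is closed under right multiplication by R̄ and, via l y ~ y r, under left
   multiplication by L̄; hence it contains W(L̄)W(R̄) = G. *)

Set Implicit Arguments.

Section TwoSidedDigraph.

Variable G : Group.
Local Notation "x * y" := (gmul G x y).
Local Notation "x ^-1" := (ginv G x) (at level 2, format "x ^-1").
Local Notation e := (gone G).

Lemma invgK (x : G) : (x^-1)^-1 = x.
Proof.
  rewrite <- (gmul_1r G ((x^-1)^-1)), <- (gmul_Vl G x).
  rewrite gmul_assoc, gmul_Vl, gmul_1l. reflexivity.
Qed.

Lemma mulKg (x y : G) : x^-1 * (x * y) = y.
Proof. rewrite gmul_assoc, gmul_Vl, gmul_1l. reflexivity. Qed.

Lemma mulgK (x y : G) : (x * y) * y^-1 = x.
Proof. rewrite <- gmul_assoc, gmul_Vr, gmul_1r. reflexivity. Qed.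

Lemma mulgKV (x y : G) : (x * y^-1) * y = x.
Proof. rewrite <- gmul_assoc, gmul_Vl, gmul_1r. reflexivity. Qed.

Lemma sbar_inv {S : G -> Prop} {x : G} : S x -> sbar S (x^-1).
Proof. intro Hx. right. rewrite invgK. exact Hx. Qed.

Lemma Wprod_rcons (S : G -> Prop) (t s : G) : Wprod S t -> S s -> Wprod S (t * s).
Proof.
  induction 1 as [s' Hs' | s' t Hs' _ IH]; intro Hs.
  - apply W_cons; [exact Hs' | apply W_one; exact Hs].
  - rewrite <- gmul_assoc. apply W_cons; [exact Hs' | exact (IH Hs)].
Qed.

Definition in_WW (A B : G -> Prop) (g : G) : Prop :=
  exists a b, Wprod A a /\ Wprod B b /\ g = a * b.

Variables L R : G -> Prop.
Local Notation wc := (weakly_connected L R).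
Local Notation arc := (arc2S L R).

Lemma wc_trans (g k h : G) : wc g k -> wc k h -> wc g h.
Proof.
  intro Hgk. revert h.
  induction Hgk as [| g k' k Hstep _ IH]; intros h Hkh; [exact Hkh |].
  exact (wc_step Hstep (IH h Hkh)).
Qed.

Lemma arc_wc (g h : G) : arc g h -> wc g h.
Proof. intro H. exact (wc_step (or_introl H) (wc_refl L R h)). Qed.

Lemma arc_wcV (g h : G) : arc h g -> wc g h.
Proof. intro H. exact (wc_step (or_intror H) (wc_refl L R h)). Qed.

Lemma wc_sym (g h : G) : wc g h -> wc h g.
Proof.
  induction 1 as [| g k h Hstep _ IH]; [apply wc_refl |].
  apply (wc_trans IH).
  destruct Hstep as [H | H]; [exact (arc_wcV H) | exact (arc_wc H)].
Qed.

Lemma wc_invariant {P : G -> Prop} :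
  (forall g h, arc g h -> (P g <-> P h)) -> forall g h, wc g h -> P g -> P h.
Proof.
  intros HP g h Hgh.
  induction Hgh as [| g k h Hstep _ IH]; intro Hg; [exact Hg |].
  apply IH.
  destruct Hstep as [H | H]; [exact (proj1 (HP _ _ H) Hg) | exact (proj2 (HP _ _ H) Hg)].
Qed.

Lemma wc_mulLR (z l r : G) : L l -> R r -> wc (l * z) (z * r).
Proof.
  intros Hl Hr. apply arc_wc. exists l, r. rewrite mulKg. auto.
Qed.

Lemma wc_mulVLR (z l r : G) : L l -> R r -> wc (l^-1 * z) (z * r^-1).
Proof.
  intros Hl Hr. apply arc_wcV. exists l, r.
  rewrite <- gmul_assoc, mulgKV. auto.
Qed.

Lemma in_WW_arc (g h : G) :
  arc g h -> (in_WW (sbar L) (sbar R) g <-> in_WW (sbar L) (sbar R) h).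
Proof.
  intros [l [r [Hl [Hr ->]]]]. split.
  - intros [a [b [Ha [Hb ->]]]]. exists (l^-1 * a), (b * r). repeat split.
    + apply W_cons; [apply sbar_inv; exact Hl | exact Ha].
    + apply Wprod_rcons; [exact Hb | left; exact Hr].
    + rewrite !gmul_assoc. reflexivity.
  - intros [a [b [Ha [Hb Heq]]]]. exists (l * a), (b * r^-1). repeat split.
    + apply W_cons; [left; exact Hl | exact Ha].
    + apply Wprod_rcons; [exact Hb | apply sbar_inv; exact Hr].
    + rewrite (gmul_assoc G (l * a)), <- (gmul_assoc G l a), <- Heq.
      rewrite (gmul_assoc G l), mulgK, gmul_assoc, gmul_Vr, gmul_1l.
      reflexivity.
Qed.

Section NonemptySides.

Context {l0 : G} (L_l0 : L l0).

Lemma wc_mulR (z r r' : G) : R r -> R r' -> wc (z * r) (z * r').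
Proof.
  intros Hr Hr'.
  exact (wc_trans (wc_sym (wc_mulLR z L_l0 Hr)) (wc_mulLR z L_l0 Hr')).
Qed.

Lemma wc_mulRV (z r r' : G) : R r -> R r' -> wc (z * r^-1) (z * r'^-1).
Proof.
  intros Hr Hr'.
  exact (wc_trans (wc_sym (wc_mulVLR z L_l0 Hr)) (wc_mulVLR z L_l0 Hr')).
Qed.

Lemma arc_mulr (g h s : G) : sbar R s -> arc g h -> wc (g * s) (h * s).
Proof.
  intros Hs [l [r1 [Hl [Hr1 ->]]]]. destruct Hs as [Hs | Hs].
  - (* (l^-1 g r1) s = l^-1 (g r1 s) is joined to g r1 s s^-1 = g r1 *)
    apply (wc_trans (wc_mulR g Hs Hr1)).
    rewrite <- !gmul_assoc, (gmul_assoc G g).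
    apply wc_sym. pose proof (wc_mulVLR (g * r1 * s) Hl Hs) as H.
    rewrite mulgK in H. exact H.
  - rewrite <- (invgK s).
    apply (wc_trans (wc_sym (wc_mulVLR g Hl Hs))).
    pose proof (wc_mulRV (l^-1 * g * r1) Hr1 Hs) as H.
    rewrite mulgK in H. exact H.
Qed.

Lemma wc_mulr (g h s : G) : sbar R s -> wc g h -> wc (g * s) (h * s).
Proof.
  intros Hs. induction 1 as [| g k h Hstep _ IH]; [apply wc_refl |].
  refine (wc_trans _ IH).
  destruct Hstep as [H | H]; [exact (arc_mulr Hs H) | exact (wc_sym (arc_mulr Hs H))].
Qed.

Lemma sbarR_wc_one (r : G) : R r -> wc r e \/ wc (r^-1) e ->
  forall s, sbar R s -> wc s e.
Proof.
  intros Hr Hre.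
  assert (Hboth : wc r e /\ wc (r^-1) e).
  { destruct Hre as [H | H].
    - split; [exact H |].
      pose proof (wc_mulr (sbar_inv Hr) H) as K.
      rewrite gmul_Vr, gmul_1l in K. exact (wc_sym K).
    - split; [| exact H].
      pose proof (wc_mulr (s := r) (or_introl Hr) H) as K.
      rewrite gmul_Vl, gmul_1l in K. exact (wc_sym K). }
  intros s [Hs | Hs].
  - pose proof (wc_mulR e Hs Hr) as K. rewrite !gmul_1l in K.
    exact (wc_trans K (proj1 Hboth)).
  - pose proof (wc_mulRV e Hs Hr) as K. rewrite !gmul_1l, invgK in K.
    exact (wc_trans K (proj2 Hboth)).
Qed.

Lemma in_WW_one {r : G} : R r -> in_WW (sbar L) (sbar R) e.
Proof.
  intro Hr. exists (l0 * l0^-1), (r * r^-1). repeat split.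
  - apply W_cons; [left; exact L_l0 | apply W_one, sbar_inv; exact L_l0].
  - apply W_cons; [left; exact Hr | apply W_one, sbar_inv; exact Hr].
  - rewrite !gmul_Vr, gmul_1l. reflexivity.
Qed.

Context {r0 : G} (R_r0 : R r0).

Lemma some_R_wc_one (x : G) : sbar L x \/ sbar R x -> wc x e ->
  exists r, R r /\ (wc r e \/ wc (r^-1) e).
Proof.
  intros [[Hx | Hx] | [Hx | Hx]] Hxe.
  - exists r0. split; [exact R_r0 | left].
    pose proof (wc_mulLR e Hx R_r0) as K. rewrite gmul_1r, gmul_1l in K.
    exact (wc_trans (wc_sym K) Hxe).
  - exists r0. split; [exact R_r0 | right].
    pose proof (wc_mulVLR e Hx R_r0) as K. rewrite gmul_1r, gmul_1l, invgK in K.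
    exact (wc_trans (wc_sym K) Hxe).
  - exists x. auto.
  - exists (x^-1). rewrite invgK. auto.
Qed.

Section ComponentOfOne.

Hypothesis sbarR_wc : forall s, sbar R s -> wc s e.

Lemma wc_one_mulr (y s : G) : sbar R s -> wc y e -> wc (y * s) e.
Proof.
  intros Hs Hy. pose proof (wc_mulr Hs Hy) as K. rewrite gmul_1l in K.
  exact (wc_trans K (sbarR_wc Hs)).
Qed.

Lemma wc_one_mull (y s : G) : sbar L s -> wc y e -> wc (s * y) e.
Proof.
  intros [Hs | Hs] Hy.
  - exact (wc_trans (wc_mulLR y Hs R_r0) (wc_one_mulr (or_introl R_r0) Hy)).
  - pose proof (wc_mulVLR y Hs R_r0) as K. rewrite invgK in K.
    exact (wc_trans K (wc_one_mulr (sbar_inv R_r0) Hy)).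
Qed.

Lemma wc_one_mulWr (y b : G) : Wprod (sbar R) b -> wc y e -> wc (y * b) e.
Proof.
  intro Hb. revert y.
  induction Hb as [s Hs | s t Hs _ IH]; intros y Hy.
  - exact (wc_one_mulr Hs Hy).
  - rewrite gmul_assoc. exact (IH _ (wc_one_mulr Hs Hy)).
Qed.

Lemma wc_one_mulWl (y a : G) : Wprod (sbar L) a -> wc y e -> wc (a * y) e.
Proof.
  intros Ha Hy.
  induction Ha as [s Hs | s t Hs _ IH].
  - exact (wc_one_mull Hs Hy).
  - rewrite <- gmul_assoc. exact (wc_one_mull Hs IH).
Qed.

Lemma wc_one_in_WW (g : G) : in_WW (sbar L) (sbar R) g -> wc g e.
Proof.
  intros [a [b [Ha [Hb ->]]]].
  apply (wc_one_mulWl Ha). rewrite <- (gmul_1l G b).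
  exact (wc_one_mulWr Hb (wc_refl L R e)).
Qed.

End ComponentOfOne.

Lemma connected_of_factorization :
  (forall g, in_WW (sbar L) (sbar R) g) ->
  (exists x, (sbar L x \/ sbar R x) /\ wc x e) ->
  digraph_weakly_connected L R.
Proof.
  intros Hfact [x [Hx Hxe]].
  destruct (some_R_wc_one Hx Hxe) as [r [Hr Hre]].
  assert (Hone : forall g, wc g e)
    by (intro g; exact (wc_one_in_WW (sbarR_wc_one Hr Hre) (Hfact g))).
  intros g h. exact (wc_trans (Hone g) (wc_sym (Hone h))).
Qed.

End NonemptySides.

End TwoSidedDigraph.

Theorem mainTheorem10 (G : Group) (L R : G -> Prop)
  (hL : exists l, L l) (hR : exists r, R r) :
  digraph_weakly_connected L R <->
  ((forall g : G, exists a b, Wprod (sbar L) a /\ Wprod (sbar R) b /\ g = gmul G a b) /\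
   (exists x : G, (sbar L x \/ sbar R x) /\ weakly_connected L R x (gone G))).
Proof.
  destruct hL as [l0 Hl0], hR as [r0 Hr0]. split.
  - intro Hconn. split.
    + intro g.
      exact (wc_invariant (@in_WW_arc G L R) (Hconn _ g) (in_WW_one G L R Hl0 Hr0)).
    + exists l0. split; [left; left; exact Hl0 | apply Hconn].
  - intros [Hfact Hx]. exact (connected_of_factorization Hl0 Hr0 Hfact Hx).
Qed.
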